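(* Let $\mathbf{A}_1$ be an algebra over a signature $\Theta$ with universe $\{0,1/2,1\}$, and let $L_1=\langle\mathbf{A}_1,F_1\rangle$ with $0\notin F_1$ and $1\in F_1$. Let $\mathbf{A}_2$ be a subalgebra of $\mathbf{A}_1$ with universe $\{0,1\}$, and let $L_2=\langle\mathbf{A}_2,\{1\}\rangle$ (a presentation of classical propositional logic over $\Theta$), with $L_2$ distinct from $L_1$. Suppose there are formulas $\top(p)$ and $\bot(p)$ in one variable $p$ with $e(\top(p))=1$ and $e(\bot(p))=0$ for every evaluation $e$ into $\mathbf{A}_1$. Then $L_1$ is maximal with respect to $L_2$.
   Context: A logical matrix is a pair $\langle\mathbf{A},F\rangle$ with $\mathbf{A}$ an algebra over $\Theta$ and $\emptyset\neq F\subseteq A$; the matrix logic has consequence relation $\Gamma\vdash\varphi$ iff every homomorphism $e$ from the formula algebra into $\mathbf{A}$ with $e[\Gamma]\subseteq F$ satisfies $e(\varphi)\in F$. $L_1$ is maximal with respect to $L_2$ if ${\vdash_{L_1}}\subsetneq{\vdash_{L_2}}$ and for every formula $\varphi$ with $\vdash_{L_2}\varphi$ but $\nvdash_{L_1}\varphi$, the logic obtained from $L_1$ by adding all substitution instances of $\varphi$ as extra premises (i.e. $\Gamma\vdash\psi$ iff $\Gamma\cup\{\sigma(\varphi):\sigma\text{ substitution}\}\vdash_{L_1}\psi$) coincides with $L_2$. *)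

From mathcomp Require Import all_boot.
Set Implicit Arguments. Unset Strict Implicit. Unset Printing Implicit Defensive.

Record signature := Signature { op : Type ; ar : op -> nat }.

Inductive formula (S : signature) : Type :=
| Var : nat -> formula S
| App : forall f : op S, ('I_(ar f) -> formula S) -> formula S.
Arguments Var {S} _.
Arguments App {S} f _.

Fixpoint occurs (S : signature) (n : nat) (phi : formula S) : Prop :=
  match phi with
  | Var m => n = m
  | App f args => exists i, occurs n (args i)
  end.

Fixpoint subst (S : signature) (sigma : nat -> formula S) (phi : formula S) : formula S :=
  match phi with
  | Var m => sigma m
  | App f args => App f (fun i => subst sigma (args i))
  end.

Definition algebra (S : signature) (A : Type) := forall f : op S, ('I_(ar f) -> A) -> A.

Fixpoint eval (S : signature) (A : Type) (alg : algebra S A) (v : nat -> A) (phi : formula S) : A :=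
  match phi with
  | Var m => v m
  | App f args => alg f (fun i => eval alg v (args i))
  end.

Definition matrix_cons (S : signature) (A : Type) (alg : algebra S A) (F : A -> Prop)
  (Gamma : formula S -> Prop) (phi : formula S) : Prop :=
  forall v : nat -> A, (forall psi, Gamma psi -> F (eval alg v psi)) -> F (eval alg v phi).

Definition crel (S : signature) := (formula S -> Prop) -> formula S -> Prop.

(* L1 extended by all substitution instances of phi as extra premises. *)
Definition axiom_ext (S : signature) (L1 : crel S) (phi : formula S) : crel S :=
  fun Gamma psi => L1 (fun chi => Gamma chi \/ exists sigma, chi = subst sigma phi) psi.

Definition empty_set (S : signature) : formula S -> Prop := fun _ => False.

Definition maximal_wrt (S : signature) (L1 L2 : crel S) : Prop :=
  (forall Gamma psi, L1 Gamma psi -> L2 Gamma psi) /\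
  (exists Gamma psi, L2 Gamma psi /\ ~ L1 Gamma psi) /\
  (forall phi, L2 (@empty_set S) phi -> ~ L1 (@empty_set S) phi ->
     forall Gamma psi, axiom_ext L1 phi Gamma psi <-> L2 Gamma psi).

Inductive three := Zero | Half | One.

Definition emb (b : bool) : three := if b then One else Zero.

From mathcomp Require Import all_boot.
From Stdlib Require Import Classical FunctionalExtensionality.

(* L1 is contained in L2 because the two-element algebra sits inside A1 and
   F1 contains 1 but not 0.  For maximality, let phi be a classical
   tautology that L1 does not prove, refuted by some valuation w into A1.  If a
   valuation v satisfies every substitution instance of phi and v(x) = 1/2,
   then the substitution sending p to top, bot or x according as w(p) is 1, 0
   or 1/2 makes v evaluate that instance exactly as w evaluates phi, which is
   impossible.  Hence v takes only classical values, and there L1 and L2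
   agree. *)

Lemma eval_subst (S : signature) (A : Type) (alg : algebra S A) (v : nat -> A)
    (sigma : nat -> formula S) (phi : formula S) :
  eval alg v (subst sigma phi) = eval alg (fun m => eval alg v (sigma m)) phi.
Proof.
elim: phi => [m|f args IH] //=.
by congr (alg f); apply: functional_extensionality => i; apply: IH.
Qed.

Lemma strict_extension {S : signature} {L1 L2 : crel S} :
  (forall Gamma psi, L1 Gamma psi -> L2 Gamma psi) ->
  (exists Gamma psi, ~ (L1 Gamma psi <-> L2 Gamma psi)) ->
  exists Gamma psi, L2 Gamma psi /\ ~ L1 Gamma psi.
Proof.
move=> sub [Gamma [psi Hn]]; exists Gamma, psi; split.
  by apply: NNPP => H2; apply: Hn; split=> [/sub // | /H2 []].
by move=> H1; apply: Hn; split=> [/sub // | _].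
Qed.

Section MatrixConsequence.

Context {S : signature} {A : Type} {alg : algebra S A} {F : A -> Prop}.

Lemma matrix_cons_empty_subst (phi : formula S) :
  matrix_cons alg F (@empty_set S) phi ->
  forall sigma v, F (eval alg v (subst sigma phi)).
Proof. by move=> Hphi sigma v; rewrite eval_subst; apply: Hphi. Qed.

Lemma matrix_cons_axiom_ext_valid (phi : formula S) Gamma psi :
  matrix_cons alg F (@empty_set S) phi ->
  axiom_ext (matrix_cons alg F) phi Gamma psi -> matrix_cons alg F Gamma psi.
Proof.
move=> Hphi Hext v HGamma; apply: Hext => chi [/HGamma // | [sigma ->]].
exact: matrix_cons_empty_subst.
Qed.

Lemma not_matrix_cons_empty {phi : formula S} :
  ~ matrix_cons alg F (@empty_set S) phi -> exists v, ~ F (eval alg v phi).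
Proof.
move=> Hphi; apply: NNPP => Hall; apply: Hphi => v _.
by apply: NNPP => Hv; apply: Hall; exists v.
Qed.

End MatrixConsequence.

Lemma classical_valuation {v : nat -> three} :
  (forall x, v x <> Half) -> exists b : nat -> bool, v = fun m => emb (b m).
Proof.
move=> Hv; exists (fun m => if v m is One then true else false).
by apply: functional_extensionality => m; move: (Hv m); case: (v m).
Qed.

Section SubalgebraOfThree.

Context {S : signature} {A1 : algebra S three} {A2 : algebra S bool}.
Hypothesis Hsub : forall (f : op S) (args : 'I_(ar f) -> bool),
  A1 f (fun i => emb (args i)) = emb (A2 f args).

Lemma eval_emb (b : nat -> bool) (phi : formula S) :
  eval A1 (fun m => emb (b m)) phi = emb (eval A2 b phi).
Proof.
elim: phi => [m|f args IH] //=; rewrite -Hsub.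
by congr (A1 f); apply: functional_extensionality => i; apply: IH.
Qed.

Context {F1 : three -> Prop}.
Hypotheses (HF0 : ~ F1 Zero) (HF1 : F1 One).

Lemma F1_emb (b : bool) : F1 (emb b) <-> b = true.
Proof. by case: b. Qed.

Lemma matrix_cons_emb {b : nat -> bool} {Gamma} {psi : formula S} :
  matrix_cons A2 (fun b => b = true) Gamma psi ->
  (forall chi, Gamma chi -> F1 (eval A1 (fun m => emb (b m)) chi)) ->
  F1 (eval A1 (fun m => emb (b m)) psi).
Proof.
move=> H HGamma; rewrite eval_emb F1_emb; apply: H => chi /HGamma.
by rewrite eval_emb F1_emb.
Qed.

Lemma matrix_cons_sub Gamma (psi : formula S) :
  matrix_cons A1 F1 Gamma psi -> matrix_cons A2 (fun b => b = true) Gamma psi.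
Proof.
move=> H b Hb; apply/F1_emb; rewrite -eval_emb; apply: H => chi /Hb.
by rewrite eval_emb => ->.
Qed.

End SubalgebraOfThree.

Section ClassicalValuations.

Context {S : signature} {A1 : algebra S three} {F1 : three -> Prop}.
Context {top bot : formula S}.
Hypotheses (Htop : forall v, eval A1 v top = One)
           (Hbot : forall v, eval A1 v bot = Zero).

Lemma instances_force_classical {phi : formula S} {w v : nat -> three} :
  ~ F1 (eval A1 w phi) ->
  (forall sigma, F1 (eval A1 v (subst sigma phi))) ->
  forall x, v x <> Half.
Proof.
move=> Hw Hinst x Hx.
pose sigma m := match w m with One => top | Zero => bot | Half => Var x end.
have Hsigma : (fun m => eval A1 v (sigma m)) = w.
  by apply: functional_extensionality => m; rewrite /sigma; case: (w m).
by apply: Hw; rewrite -Hsigma -eval_subst.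
Qed.

End ClassicalValuations.

Theorem corollary2p3 (S : signature) (A1 : algebra S three) (F1 : three -> Prop)
  (A2 : algebra S bool)
  (HF0 : ~ F1 Zero) (HF1 : F1 One)
  (Hsub : forall (f : op S) (args : 'I_(ar f) -> bool),
            A1 f (fun i => emb (args i)) = emb (A2 f args))
  (Hdist : exists (Gamma : formula S -> Prop) (phi : formula S),
             ~ (matrix_cons A1 F1 Gamma phi <-> matrix_cons A2 (fun b => b = true) Gamma phi))
  (top bot : formula S)
  (Htopv : forall n, occurs n top -> n = 0%N)
  (Hbotv : forall n, occurs n bot -> n = 0%N)
  (Htop : forall v : nat -> three, eval A1 v top = One)
  (Hbot : forall v : nat -> three, eval A1 v bot = Zero) :
  maximal_wrt (matrix_cons A1 F1) (matrix_cons A2 (fun b => b = true)).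
Proof.
have sub := matrix_cons_sub Hsub HF0 HF1.
split; first exact: sub.
split; first exact: strict_extension sub Hdist.
move=> phi H2 H1 Gamma psi; split.
  by move=> Hext; apply: matrix_cons_axiom_ext_valid H2 (sub _ _ Hext).
move=> H v Hv.
have [w Hw] := not_matrix_cons_empty H1.
have Hclass := instances_force_classical Htop Hbot Hw
  (fun sigma => Hv _ (or_intror (ex_intro _ sigma erefl))).
have [b Hb] := classical_valuation Hclass; subst v.
by apply: (matrix_cons_emb Hsub HF0 HF1 H) => chi Hchi; apply: Hv; left.
Qed.
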